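(* Let $G$ be a finite group with subgroups $H$ and $K$, and let $\Omega_K$ be a left transversal of the normalizer $N_G(K)$ in $G$. Then the number of double cosets $HgK$ is $$|H\backslash G/K|=\sum_{l\in\Omega_K}\frac{[N_G(K):K]\cdot|lKl^{-1}\cap H|}{|H|}.$$
   Context: A left transversal of a subgroup is a set of representatives of its left cosets in $G$. *)

From mathcomp Require Import all_boot all_algebra all_fingroup.
Set Implicit Arguments. Unset Strict Implicit. Unset Printing Implicit Defensive.
Import GRing.Theory.

Open Scope group_scope.

Definition double_cosets (gT : finGroupType) (H K G : {set gT}) : {set {set gT}} :=
  [set (H :* g) * K | g in G].

Definition left_transversal (gT : finGroupType) (Omega N G : {set gT}) : Prop :=
  is_transversal Omega (lcosets N G) G.

From mathcomp Require Import all_boot all_algebra all_fingroup.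
Set Implicit Arguments. Unset Strict Implicit. Unset Printing Implicit Defensive.
Import GRing.Theory.
Local Open Scope group_scope.

(* Count S = sum_(g in G) |gKg^-1 :&: H| in two ways (in MathComp, gKg^-1 is
   written K :^ g^-1).  The summand is constant on each double coset HgK, which
   has |H||K| / |gKg^-1 :&: H| elements, so S = |H\G/K| |H||K|.  It is also
   constant on each left coset of N_G(K), so S = |N_G(K)| sum_(l in Omega)
   |lKl^-1 :&: H|, and |N_G(K)| = [N_G(K) : K] |K|. *)

Lemma sum_lcoset_transversal (R : nmodType) (gT : finGroupType)
    (G N : {group gT}) (X : {set gT}) (f : gT -> R) :
  is_transversal X (lcosets N G) G ->
  (forall g, {in N, forall n, f (g * n) = f g}) ->
  (\sum_(g in G) f g = \sum_(x in X) f x *+ #|N|)%R.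
Proof.
move=> trX fN; have /and3P[partN sXG _] := trX.
rewrite (set_partition_big _ partN) /= -(pblock_transversal trX).
rewrite big_imset /=; last exact: pblock_inj trX.
apply: eq_bigr => x Xx.
have xN_lcoset : x *: N \in lcosets N G.
  by apply/lcosetsP; exists x; rewrite ?(subsetP sXG).
rewrite (def_pblock (partition_trivIset partN) xN_lcoset (lcoset_refl N x)).
rewrite -lcosetE big_imset /=; last by move=> ? ? _ _ /mulgI.
by rewrite -sumr_const; apply: eq_bigr => n Nn; rewrite fN.
Qed.

Section DoubleCosets.

Variables (gT : finGroupType) (H K : {group gT}).

Lemma double_cosetE g : H :* g * K = (H * K :^ g^-1) :* g.
Proof.
rewrite conjsgE invgK !mulgA -(mulgA _ [set g^-1]) mulg_set1 mulVg.
by rewrite -set1gE mulg1.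
Qed.

Lemma card_double_coset g :
  (#|(H :* g * K)%g| * #|K :^ g^-1 :&: H| = #|H| * #|K|)%N.
Proof.
by rewrite double_cosetE card_rcoset setIC -(cardJg K g^-1) mul_cardG.
Qed.

Lemma double_coset_refl g : g \in H :* g * K.
Proof. by rewrite -[g in g \in _]mul1g -[_ * g]mulg1 !mem_mulg ?set11. Qed.

Lemma double_coset_transl g g0 :
  g \in H :* g0 * K -> H :* g * K = H :* g0 * K.
Proof.
case/mulsgP=> _ k /mulsgP[h _ Hh /set1P -> ->] Kk ->.
by rewrite -!mulg_set1 !mulgA rcoset_id // -!mulgA lcoset_id.
Qed.

Lemma sum_card_conjI_double_coset g0 :
  (\sum_(g in (H :* g0 * K)%g) #|K :^ g^-1 :&: H| = #|H| * #|K|)%N.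
Proof.
have D_gt0 : (0 < #|(H :* g0 * K)%g|)%N.
  by apply/card_gt0P; exists g0; apply: double_coset_refl.
rewrite -(card_double_coset g0) -sum_nat_const; apply: eq_bigr => g Dg.
apply/eqP; rewrite -(eqn_pmul2l D_gt0) card_double_coset.
by rewrite -{1}(double_coset_transl Dg) card_double_coset.
Qed.

Lemma sum_card_conjI_double_cosets (G : {group gT}) :
  H \subset G -> K \subset G ->
  (\sum_(g in G) #|K :^ g^-1 :&: H| = #|double_cosets H K G| * (#|H| * #|K|))%N.
Proof.
move=> sHG sKG; rewrite (partition_big_imset (fun g => H :* g * K)).
rewrite -sum_nat_const; apply: eq_bigr => _ /imsetP[g0 Gg0 ->].
rewrite -(sum_card_conjI_double_coset g0); apply: eq_bigl => g /=.
apply/andP/idP => [[_ /eqP <-] | Dg]; first exact: double_coset_refl.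
split; last by rewrite (double_coset_transl Dg).
by apply: subsetP Dg; rewrite !mul_subG ?sub1set.
Qed.

End DoubleCosets.

Theorem lemma3p3 (gT : finGroupType) (G H K : {group gT}) (Omega : {set gT})
  (sHG : H \subset G) (sKG : K \subset G)
  (hOmega : left_transversal Omega 'N_G(K) G) :
  (#|double_cosets H K G|%:R : rat) =
  (\sum_(l in Omega)
     ((#|'N_G(K) : K|%:R * #|(K :^ l^-1) :&: H|%:R) / #|H|%:R))%R.
Proof.
have sKN : K \subset 'N_G(K) by rewrite subsetI sKG normG.
have conjI_invariant g : {in 'N_G(K), forall n,
    #|K :^ (g * n)^-1 :&: H| = #|K :^ g^-1 :&: H|}.
  by move=> n /setIP[_ nKn]; rewrite invMg conjsgM (normP (groupVr nKn)).
have count : (#|double_cosets H K G| * #|H| =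
              \sum_(l in Omega) #|'N_G(K) : K| * #|K :^ l^-1 :&: H|)%N.
  apply/eqP; rewrite -(eqn_pmul2r (cardG_gt0 K)) -mulnA.
  rewrite -sum_card_conjI_double_cosets //.
  rewrite (sum_lcoset_transversal hOmega conjI_invariant).
  rewrite big_distrl; apply/eqP/eq_bigr => l _ /=.
  by rewrite -mulr_natr natn mulnAC mulnC -(Lagrange sKN) mulnC.
have H_neq0 : (#|H|%:R != 0 :> rat)%R by rewrite Num.Theory.pnatr_eq0 -lt0n.
rewrite -mulr_suml -[LHS](mulfK H_neq0) -natrM count natr_sum.
by congr (_ / _)%R; apply: eq_bigr => l _; rewrite natrM.
Qed.
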